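(* Let $T$ be a completely non-unitary contraction on $H$. Then, in the strong symplectic Hilbert space $\mathbb{H}=H\oplus_\perp H$, $$A_T^{\perp_s}=A_T\oplus_\perp Q\oplus_\perp Q_*,$$ where the direct sum is orthogonal with respect to the Hilbert space inner product of $\mathbb{H}$.
   Context: $H$ is an infinite-dimensional separable complex Hilbert space with inner product $(\cdot,\cdot)_H$. A contraction is $T\in\mathbb{B}(H)$ with $\|T\|\le1$; it is completely non-unitary (c.n.u.) if there is no nonzero invariant subspace $\mathcal{K}$ with $T|_{\mathcal{K}}$ unitary. Put $\mathbb{K}=\ker(I-T^*T)$, $\mathbb{K}_*=\ker(I-TT^* )$. Let $\mathbb{H}=H\oplus_\perp H$ with strong symplectic structure $[(x_1,x_2),(y_1,y_2)]=i(x_1,y_1)_H-i(x_2,y_2)_H$, and for $S\subseteq\mathbb{H}$ let $S^{\perp_s}=\{a\in\mathbb{H}:[a,b]=0\ \forall b\in S\}$. Let $A_T=\{(x,Tx):x\in\mathbb{K}\}$, $Q=\{(x,0):x\in\mathbb{K}^\perp\}$ and $Q_*=\{(0,x):x\in\mathbb{K}_*^\perp\}$. *)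

From HB Require Import structures.
From mathcomp Require Import all_boot all_order all_algebra.
From mathcomp Require Import complex.
From mathcomp Require Import all_classical all_reals.
Set Implicit Arguments. Unset Strict Implicit. Unset Printing Implicit Defensive.
Import Order.TTheory GRing.Theory Num.Theory.
Local Open Scope ring_scope.
Local Open Scope classical_set_scope.

Section Hilbert.
Variables (R : realType) (V : lmodType R[i]) (ip : V -> V -> R[i]).

Definition hnorm (x : V) : R := Num.sqrt (complex.Re (ip x x)).

Definition inner_product_axioms : Prop :=
  [/\ (forall (a : R[i]) x y z, ip (a *: x + y) z = a * ip x z + ip y z),
      (forall x y, ip y x = (ip x y)^*%C),
      (forall x, complex.Im (ip x x) = 0 /\ 0 <= complex.Re (ip x x)) &
      (forall x, ip x x = 0 -> x = 0)].

Definition hcauchy (u : nat -> V) : Prop :=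
  forall e : R, 0 < e -> exists N : nat, forall m n, (N <= m)%N -> (N <= n)%N ->
    hnorm (u m - u n) < e.

Definition hconverges (u : nat -> V) (l : V) : Prop :=
  forall e : R, 0 < e -> exists N : nat, forall n, (N <= n)%N -> hnorm (u n - l) < e.

Definition hcomplete : Prop := forall u, hcauchy u -> exists l, hconverges u l.

Definition hseparable : Prop :=
  exists d : nat -> V, forall x (e : R), 0 < e -> exists n, hnorm (x - d n) < e.

Definition hinfinite_dim : Prop :=
  forall n : nat, exists s : 'I_n -> V,
    forall c : 'I_n -> R[i], \sum_(k < n) c k *: s k = 0 -> forall k, c k = 0.

Definition is_inf_sep_hilbert : Prop :=
  [/\ inner_product_axioms, hcomplete, hseparable & hinfinite_dim].

Definition bounded_linear (T : V -> V) : Prop :=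
  (forall (a : R[i]) x y, T (a *: x + y) = a *: T x + T y) /\
  exists M : R, forall x, hnorm (T x) <= M * hnorm x.

Definition is_adjoint (T Ts : V -> V) : Prop := forall x y, ip (T x) y = ip x (Ts y).

Definition contraction (T : V -> V) : Prop :=
  bounded_linear T /\ forall x, hnorm (T x) <= hnorm x.

Definition hclosed (S : set V) : Prop :=
  forall u l, (forall n, S (u n)) -> hconverges u l -> S l.

Definition closed_subspace (S : set V) : Prop :=
  [/\ S 0, (forall (a : R[i]) x y, S x -> S y -> S (a *: x + y)) & hclosed S].

(* completely non-unitary: no nonzero (closed) invariant subspace on which
   T restricts to a unitary operator (isometric and onto the subspace) *)
Definition cnu (T : V -> V) : Prop :=
  forall S : set V, closed_subspace S ->
    (forall x, S x -> S (T x)) ->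
    (forall x, S x -> hnorm (T x) = hnorm x) ->
    (forall y, S y -> exists2 x, S x & T x = y) ->
    forall x, S x -> x = 0.

Definition defK (T Ts : V -> V) : set V := [set x | x - Ts (T x) = 0].
Definition defKs (T Ts : V -> V) : set V := [set x | x - T (Ts x) = 0].

Definition orthocompl (S : set V) : set V := [set x | forall y, S y -> ip x y = 0].

Definition ip2 (a b : V * V) : R[i] := ip a.1 b.1 + ip a.2 b.2.

Definition sform (a b : V * V) : R[i] := 'i * ip a.1 b.1 - 'i * ip a.2 b.2.

Definition sperp (S : set (V * V)) : set (V * V) :=
  [set a | forall b, S b -> sform a b = 0].

Definition A_T (T Ts : V -> V) : set (V * V) :=
  [set p | exists2 x, defK T Ts x & p = (x, T x)].
Definition Q_ (T Ts : V -> V) : set (V * V) :=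
  [set p | exists2 x, orthocompl (defK T Ts) x & p = (x, 0)].
Definition Qs_ (T Ts : V -> V) : set (V * V) :=
  [set p | exists2 x, orthocompl (defKs T Ts) x & p = (0, x)].

Definition orth2 (S1 S2 : set (V * V)) : Prop :=
  forall a b, S1 a -> S2 b -> ip2 a b = 0.

Definition sum3 (S1 S2 S3 : set (V * V)) : set (V * V) :=
  [set p | exists a b c, [/\ S1 a, S2 b, S3 c &
     p = (a.1 + b.1 + c.1, a.2 + b.2 + c.2)]].

Definition orth_dsum3 (S S1 S2 S3 : set (V * V)) : Prop :=
  [/\ S = sum3 S1 S2 S3, orth2 S1 S2, orth2 S1 S3 & orth2 S2 S3].

End Hilbert.

(* A pair (a1, a2) is s-orthogonal to A_T exactly when (a1, k) = (a2, T k) for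
   every k in K.  As I - T T^* is self-adjoint, its kernel K_* is the orthogonal
   complement of its range, hence closed, and the projection theorem
   (a minimising sequence is Cauchy by the parallelogram law) splits
   a2 = p + (a2 - p) with p in K_* and a2 - p orthogonal to K_*.  Then
   x := T^* p lies in K with T x = p, and (a1 - x, k) = (a2 - p, T k) = 0 for k
   in K because T maps K into K_*; so (a1, a2) = (x, T x) + (a1 - x, 0) + (0, a2 - p). *)

From HB Require Import structures.
From mathcomp Require Import all_boot all_order all_algebra.
From mathcomp Require Import complex.
From mathcomp Require Import all_classical all_reals.
From mathcomp Require Import ring lra.
Set Implicit Arguments. Unset Strict Implicit. Unset Printing Implicit Defensive.
Import Order.TTheory GRing.Theory Num.Theory.
Local Open Scope ring_scope.
Local Open Scope classical_set_scope.
Local Open Scope complex_scope.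

Lemma discriminant_le (F : realFieldType) (a b c : F) : 0 <= c ->
  (forall t : F, 0 <= a + 2 * t * b + t ^+ 2 * c) -> b ^+ 2 <= a * c.
Proof.
move=> c_ge0 nonneg; have [c0|c_neq0] := eqVneq c 0.
  rewrite c0 mulr0; have [-> | b_neq0] := eqVneq b 0; first by rewrite expr2 mulr0.
  have tb : (a + 1) / (2 * b) * (2 * b) = a + 1 by rewrite divfK ?mulf_neq0 ?pnatr_eq0.
  by have := nonneg (- ((a + 1) / (2 * b))); rewrite c0; nra.
have c_gt0 : 0 < c by rewrite lt_def c_neq0.
have tc : b / c * c = b by rewrite divfK.
by have := nonneg (- (b / c)); nra.
Qed.

Lemma natSinv_lt_eventually (F : archiRealFieldType) (e : F) : 0 < e ->
  exists N, forall n, (N <= n)%N -> (n.+1%:R : F)^-1 < e.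
Proof.
move=> e_gt0; exists (Num.truncn e^-1) => n le_Nn.
by rewrite invf_plt ?posrE ?ltr0Sn // (lt_le_trans (truncnS_gt _)) // ler_nat ltnS.
Qed.

Lemma natSinv_gt0 (F : numFieldType) (n : nat) : 0 < (n.+1%:R : F)^-1.
Proof. by rewrite invr_gt0 ltr0Sn. Qed.

Section InnerProduct.
Variables (R : realType) (V : lmodType R[i]) (ip : V -> V -> R[i]).
Hypothesis ip_axioms : inner_product_axioms ip.

Lemma ipDZl (a : R[i]) (x y z : V) : ip (a *: x + y) z = a * ip x z + ip y z.
Proof. by case: ip_axioms. Qed.

Lemma ipC (x y : V) : ip y x = (ip x y)^*%C.
Proof. by case: ip_axioms. Qed.

Lemma ip0l (z : V) : ip 0 z = 0.
Proof.
have := ipDZl 1 0 0 z; rewrite scale1r addr0 mul1r => ip0D.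
by apply: (@addrI _ (ip 0 z)); rewrite addr0.
Qed.

Lemma ipDl (x y z : V) : ip (x + y) z = ip x z + ip y z.
Proof. by rewrite -{1}(scale1r x) ipDZl mul1r. Qed.

Lemma ipZl (a : R[i]) (x z : V) : ip (a *: x) z = a * ip x z.
Proof. by rewrite -[a *: x]addr0 ipDZl ip0l addr0. Qed.

Lemma ipNl (x z : V) : ip (- x) z = - ip x z.
Proof. by rewrite -scaleN1r ipZl mulN1r. Qed.

Lemma ipBl (x y z : V) : ip (x - y) z = ip x z - ip y z.
Proof. by rewrite ipDl ipNl. Qed.

Lemma ip0r (z : V) : ip z 0 = 0.
Proof. by rewrite ipC ip0l conjc0. Qed.

Lemma ipDr (x y z : V) : ip x (y + z) = ip x y + ip x z.
Proof. by rewrite ipC ipDl rmorphD /= -!ipC. Qed.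

Lemma ipZr (a : R[i]) (x z : V) : ip x (a *: z) = a^*%C * ip x z.
Proof. by rewrite ipC ipZl rmorphM /= -ipC. Qed.

Lemma ipBr (x y z : V) : ip x (y - z) = ip x y - ip x z.
Proof. by rewrite ipC ipBl rmorphB /= -!ipC. Qed.

Definition sqnorm (x : V) : R := complex.Re (ip x x).

Lemma ip_self (x : V) : ip x x = (sqnorm x)%:C.
Proof.
case: ip_axioms => _ _ /(_ x) [Im0 _] _.
by rewrite /sqnorm; case: (ip x x) Im0 => a b /= ->.
Qed.

Lemma sqnorm_ge0 (x : V) : 0 <= sqnorm x.
Proof. by case: ip_axioms => _ _ /(_ x) []. Qed.

Lemma hnorm_ge0 (x : V) : 0 <= hnorm ip x.
Proof. exact: sqrtr_ge0. Qed.

Lemma hnorm_sqr (x : V) : hnorm ip x ^+ 2 = sqnorm x.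
Proof. by rewrite sqr_sqrtr ?sqnorm_ge0. Qed.

Lemma hnorm_le (x y : V) : (hnorm ip x <= hnorm ip y) = (sqnorm x <= sqnorm y).
Proof. by rewrite ler_sqrt ?sqnorm_ge0. Qed.

Lemma hnorm_lt (x : V) (e : R) : 0 < e -> (hnorm ip x < e) = (sqnorm x < e ^+ 2).
Proof. by move=> e_gt0; rewrite -{1}(gtr0_norm e_gt0) -sqrtr_sqr ltr_sqrt ?exprn_gt0. Qed.

Lemma sqnorm_addZ (x y : V) (t : R) :
  sqnorm (x + t%:C *: y) = sqnorm x + 2 * t * complex.Re (ip x y) + t ^+ 2 * sqnorm y.
Proof.
rewrite /sqnorm ipDl !ipDr !ipZl !ipZr (ipC x y) !ip_self.
by case: (ip x y) => c d /=; ring.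
Qed.

Lemma Re_ip_sqr_le (x y : V) : complex.Re (ip x y) ^+ 2 <= sqnorm x * sqnorm y.
Proof.
by apply: discriminant_le; [exact: sqnorm_ge0 | move=> t; rewrite -sqnorm_addZ sqnorm_ge0].
Qed.

Lemma Re_ip_le (x y : V) : `|complex.Re (ip x y)| <= hnorm ip x * hnorm ip y.
Proof.
rewrite -ler_sqr ?nnegrE ?mulr_ge0 ?hnorm_ge0 // real_normK ?num_real //.
by rewrite exprMn !hnorm_sqr Re_ip_sqr_le.
Qed.

Lemma hnormD_le (x y : V) : hnorm ip (x + y) <= hnorm ip x + hnorm ip y.
Proof.
rewrite -ler_sqr ?nnegrE ?addr_ge0 ?hnorm_ge0 // !hnorm_sqr.
rewrite -[y]scale1r (_ : 1 = 1%:C) // sqnorm_addZ scale1r -!hnorm_sqr.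
have := ler_norm (complex.Re (ip x y)); have := Re_ip_le x y; nra.
Qed.

Lemma ip_eq0_Re (x y : V) :
  complex.Re (ip x y) = 0 -> complex.Re (ip x ('i%C *: y)) = 0 -> ip x y = 0.
Proof. by rewrite ipZr; case: (ip x y) => a b /= -> Im0; congr Complex; lra. Qed.

Lemma Re_ip_limit (u : nat -> V) (l z : V) : hconverges ip u l ->
  (forall n, complex.Re (ip (u n) z) = 0) -> complex.Re (ip l z) = 0.
Proof.
move=> u_to_l u_orth; apply/normr0_eq0/eqP; rewrite eq_le normr_ge0 andbT.
apply/ler_addgt0Pr => e e_gt0; rewrite add0r.
have nz_gt0 : 0 < hnorm ip z + 1 by rewrite ltr_wpDl ?hnorm_ge0.
have [N /(_ N (leqnn N)) close] := u_to_l _ (divr_gt0 e_gt0 nz_gt0).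
have -> : complex.Re (ip l z) = - complex.Re (ip (u N - l) z).
  by rewrite ipBl raddfB /= u_orth sub0r opprK.
rewrite normrN (le_trans (Re_ip_le _ _)) //.
rewrite -[e](@divfK _ (hnorm ip z + 1)) ?gt_eqF // ler_pM ?hnorm_ge0 ?ltW //.
by rewrite ltrDl.
Qed.

Lemma ip_limit_eq0 (u : nat -> V) (l z : V) : hconverges ip u l ->
  (forall n, ip (u n) z = 0) -> ip l z = 0.
Proof.
move=> u_to_l u_orth; apply: ip_eq0_Re; apply: (Re_ip_limit u_to_l) => n.
  by rewrite u_orth.
by rewrite ipZr u_orth mulr0.
Qed.

Lemma closed_subspace_orthocompl (W : set V) : closed_subspace ip (orthocompl ip W).
Proof.
split.
- by move=> y _; rewrite ip0l.
- by move=> a x y x_orth y_orth z Wz; rewrite ipDZl x_orth // y_orth // mulr0 addr0.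
- by move=> u l u_orth u_to_l z Wz; apply: (ip_limit_eq0 u_to_l) => n; apply: u_orth.
Qed.

Lemma sqnorm_double (x : V) : sqnorm (x + x) = 4 * sqnorm x.
Proof.
by rewrite -{2}[x]scale1r (_ : 1 = 1%:C) // sqnorm_addZ /sqnorm; ring.
Qed.

Lemma parallelogram (x y : V) :
  sqnorm (x + y) + sqnorm (x - y) = 2 * sqnorm x + 2 * sqnorm y.
Proof.
rewrite -{1}[y]scale1r -scaleN1r (_ : 1 = 1%:C) // (_ : -1 = (-1)%:C).
  by rewrite !sqnorm_addZ; ring.
by apply/eqP; rewrite eq_complex /= oppr0 !eqxx.
Qed.

Lemma min_dist_limit (u : nat -> V) (l v : V) (d : R) (r : nat -> R) :
  hconverges ip u l -> (forall e, 0 < e -> exists N, forall n, (N <= n)%N -> r n < e) ->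
  (forall n, hnorm ip (v - u n) < d + r n) -> hnorm ip (v - l) <= d.
Proof.
(* [e] is retyped at [R] so that [lra] sees a single ring structure. *)
move=> u_to_l r_small u_close; apply/ler_addgt0Pr => e; move: (e : R) => {}e e_gt0.
have e2_gt0 : 0 < e / 2 by rewrite divr_gt0.
have [N1 N1_close] := u_to_l _ e2_gt0.
have [N2 N2_small] := r_small _ e2_gt0.
have := N1_close _ (leq_maxl N1 N2); have := N2_small _ (leq_maxr N1 N2).
have := u_close (maxn N1 N2).
have := hnormD_le (v - u (maxn N1 N2)) (u (maxn N1 N2) - l); rewrite addrA subrK.
lra.
Qed.

End InnerProduct.

Section Projection.
Variables (R : realType) (V : lmodType R[i]) (ip : V -> V -> R[i]).
Variables (S : set V) (v : V).
Hypotheses (ip_axioms : inner_product_axioms ip) (S_closed : closed_subspace ip S).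

Let S_DZ (a : R[i]) (x y : V) : S x -> S y -> S (a *: x + y).
Proof. by case: S_closed => _ S_lin _; apply: S_lin. Qed.

Let S_Z (a : R[i]) (x : V) : S x -> S (a *: x).
Proof. by move=> Sx; rewrite -[a *: x]addr0; apply: S_DZ => //; case: S_closed. Qed.

Lemma orthocompl_of_min_dist (l : V) : S l ->
  (forall s, S s -> hnorm ip (v - l) <= hnorm ip (v - s)) -> orthocompl ip S (v - l).
Proof.
move=> Sl l_min.
have Re0 y : S y -> complex.Re (ip (v - l) y) = 0.
  move=> Sy; apply/eqP; rewrite -sqrf_eq0 eq_le sqr_ge0 andbT.
  rewrite -(mul0r (sqnorm ip y)); apply: discriminant_le => [|t].
    exact: sqnorm_ge0.
  have := l_min _ (S_DZ (- t%:C) Sy Sl).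
  rewrite hnorm_le // scaleNr opprD opprK [t%:C *: y - l]addrC addrA sqnorm_addZ //.
  lra.
by move=> y Sy; apply: ip_eq0_Re => //; apply: Re0 => //; apply: S_Z.
Qed.

Lemma min_dist_cauchy (d : R) (r : nat -> R) (u : nat -> V) : 0 <= d ->
  (forall e, 0 < e -> exists N, forall n, (N <= n)%N -> r n < e) ->
  (forall s, S s -> d <= hnorm ip (v - s)) -> (forall n, S (u n)) ->
  (forall n, hnorm ip (v - u n) < d + r n) -> hcauchy ip u.
Proof.
move=> d_ge0 r_small d_le Su u_close.
have r_gt0 n : 0 < r n by have := d_le _ (Su n); have := u_close n; lra.
have gap m n : sqnorm ip (u m - u n) <= 4 * d * (r n + r m) + 2 * (r n ^+ 2 + r m ^+ 2).
  pose mid := 2^-1 *: (u n + u m).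
  have Smid : S mid by apply/S_Z; rewrite -[u n]scale1r; apply: S_DZ.
  have mid2 : mid + mid = u n + u m.
    by rewrite /mid -scalerDl -[2^-1]mul1r -splitr scale1r.
  have diff : (v - u n) - (v - u m) = u m - u n by rewrite opprB addrC addrA subrK.
  have sum : (v - u n) + (v - u m) = (v - mid) + (v - mid).
    by rewrite [LHS]addrACA -opprD -mid2 opprD addrACA.
  have := parallelogram ip_axioms (v - u n) (v - u m).
  rewrite diff sum sqnorm_double // -!hnorm_sqr //.
  have := d_le _ Smid; have := u_close n; have := u_close m.
  have := d_le _ (Su n); have := d_le _ (Su m).
  nra.
move=> e e_gt0.
have k_gt0 : 0 < 8 * d + 4 by lra.
have [x x_gt0 xk] : exists2 x, 0 < x & x * (8 * d + 4) = e ^+ 2.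
  by exists (e ^+ 2 / (8 * d + 4)); rewrite ?divr_gt0 ?exprn_gt0 ?divfK ?gt_eqF.
have [N N_small] : exists N, forall n, (N <= n)%N -> r n < Num.min 1 x.
  by apply: r_small; rewrite lt_min ltr01 x_gt0.
exists N => m n Nm Nn; rewrite hnorm_lt //; apply: le_lt_trans (gap m n) _.
move: (N_small m Nm) (N_small n Nn); rewrite !lt_min => /andP[? ?] /andP[? ?].
by have := r_gt0 n; have := r_gt0 m; nra.
Qed.

Lemma min_dist_exists : hcomplete ip ->
  exists2 l, S l & forall s, S s -> hnorm ip (v - l) <= hnorm ip (v - s).
Proof.
move=> complete; pose E := [set hnorm ip (v - s) | s in S].
have S0 : S 0 by case: S_closed.
have E_lb0 : lbound E 0 by move=> _ [s _ <-]; exact: hnorm_ge0.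
have E_inf : has_inf E by split; [exists (hnorm ip (v - 0)), 0 | exists 0].
have d_le s : S s -> inf E <= hnorm ip (v - s) by move=> Ss; apply: (ge_inf E_inf.2); exists s.
have d_ge0 : 0 <= inf E by apply: lb_le_inf E_inf.1 E_lb0.
have /choice [u u_near] n : exists s, S s /\ hnorm ip (v - s) < inf E + (n.+1%:R)^-1.
  by have [_ [s Ss <-]] := inf_adherent (natSinv_gt0 _ n) E_inf; exists s.
have r_small := @natSinv_lt_eventually R.
have Su n : S (u n) by case: (u_near n).
have u_close n := (u_near n).2.
have [l u_to_l] := complete u (min_dist_cauchy d_ge0 r_small d_le Su u_close).
exists l; first by case: S_closed => _ _; apply.
by move=> s Ss; apply: le_trans (d_le s Ss); apply: min_dist_limit u_to_l r_small u_close.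
Qed.

Lemma orthocompl_proj_exists : hcomplete ip -> exists2 p, S p & orthocompl ip S (v - p).
Proof.
by move=> /min_dist_exists [l Sl l_min]; exists l => //; apply: orthocompl_of_min_dist.
Qed.

End Projection.

Section Operator.
Variables (R : realType) (V : lmodType R[i]) (ip : V -> V -> R[i]) (T Ts : V -> V).
Hypotheses (ip_axioms : inner_product_axioms ip) (T_adj : is_adjoint ip T Ts).

Let adjE (x y : V) : ip (T x) y = ip x (Ts y) := T_adj x y.

Lemma defKP (x : V) : defK T Ts x <-> Ts (T x) = x.
Proof. by split=> [/subr0_eq/esym //|Kx]; rewrite /defK /= Kx subrr. Qed.

Lemma defKsP (x : V) : defKs T Ts x <-> T (Ts x) = x.
Proof. by split=> [/subr0_eq/esym //|Ksx]; rewrite /defKs /= Ksx subrr. Qed.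

Lemma T_defK (k : V) : defK T Ts k -> defKs T Ts (T k).
Proof. by move/defKP=> TsTk; apply/defKsP; rewrite TsTk. Qed.

Lemma Ts_defKs (p : V) : defKs T Ts p -> defK T Ts (Ts p).
Proof. by move/defKsP=> TTsp; apply/defKP; rewrite TTsp. Qed.

Lemma ip_T_defK (x k : V) : defK T Ts k -> ip (T x) (T k) = ip x k.
Proof. by move/defKP=> TsTk; rewrite adjE TsTk. Qed.

Lemma defKs_orthocompl : defKs T Ts = orthocompl ip (range (fun z => z - T (Ts z))).
Proof.
have sym x z : ip (x - T (Ts x)) z = ip x (z - T (Ts z)).
  by rewrite ipBl // ipBr // adjE [ip x (T _)]ipC // adjE -ipC.
apply/seteqP; split=> x.
  by move=> Ksx _ [z _ <-]; rewrite -sym Ksx ip0l.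
move=> x_orth; case: ip_axioms => _ _ _; apply.
by rewrite {1}sym; apply: x_orth; exists (x - T (Ts x)).
Qed.

Lemma closed_subspace_defKs : closed_subspace ip (defKs T Ts).
Proof. by rewrite defKs_orthocompl; apply: closed_subspace_orthocompl. Qed.

Lemma sperp_A_TP (a : V * V) :
  sperp ip (A_T T Ts) a <-> forall k, defK T Ts k -> ip a.1 k = ip a.2 (T k).
Proof.
split=> [a_perp k Kk | a_K _ [k Kk ->]]; last by rewrite /sform /= a_K // subrr.
have := a_perp _ (ex_intro2 _ _ k Kk erefl).
by rewrite /sform /= -mulrBr => /eqP; rewrite mulf_eq0 (negbTE (neq0Ci _)) subr_eq0 => /eqP.
Qed.

Lemma sum3_sub_sperp_A_T :
  sum3 (A_T T Ts) (Q_ ip T Ts) (Qs_ ip T Ts) `<=` sperp ip (A_T T Ts).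
Proof.
move=> _ [_ [_ [_ [[x Kx ->] [q q_orth ->] [r r_orth ->] ->]]]].
apply/sperp_A_TP => k Kk /=.
by rewrite !addr0 !ipDl // (q_orth k Kk) (r_orth _ (T_defK Kk)) (ip_T_defK x Kk) !addr0.
Qed.

Lemma sperp_A_T_sub_sum3 : hcomplete ip ->
  sperp ip (A_T T Ts) `<=` sum3 (A_T T Ts) (Q_ ip T Ts) (Qs_ ip T Ts).
Proof.
move=> complete [a1 a2] /sperp_A_TP /= a_perp.
have [p Ksp p_orth] : exists2 p, defKs T Ts p & orthocompl ip (defKs T Ts) (a2 - p).
  exact: orthocompl_proj_exists ip_axioms closed_subspace_defKs complete.
have Tx : T (Ts p) = p by apply/defKsP.
exists (Ts p, T (Ts p)), (a1 - Ts p, 0), (0, a2 - p); split.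
- by exists (Ts p); first exact: Ts_defKs.
- exists (a1 - Ts p) => // k Kk.
  rewrite ipBl // a_perp // -[a2](subrK p) ipDl // (p_orth _ (T_defK Kk)) add0r.
  by rewrite -{1}Tx ip_T_defK // subrr.
- by exists (a2 - p).
- by rewrite /= Tx !addr0 !(addrC _ (_ - _)) !subrK.
Qed.

Lemma orth2_A_T_Q : orth2 ip (A_T T Ts) (Q_ ip T Ts).
Proof.
by move=> _ _ [x Kx ->] [q q_orth ->]; rewrite /ip2 /= ip0r // addr0 ipC // q_orth // conjc0.
Qed.

Lemma orth2_A_T_Qs : orth2 ip (A_T T Ts) (Qs_ ip T Ts).
Proof.
move=> _ _ [x Kx ->] [r r_orth ->].
by rewrite /ip2 /= ip0r // add0r ipC // (r_orth _ (T_defK Kx)) conjc0.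
Qed.

Lemma orth2_Q_Qs : orth2 ip (Q_ ip T Ts) (Qs_ ip T Ts).
Proof. by move=> _ _ [x _ ->] [y _ ->]; rewrite /ip2 /= ip0r // ip0l // addr0. Qed.

End Operator.

Theorem lemma4p2 (R : realType) (V : lmodType R[i]) (ip : V -> V -> R[i])
  (T Ts : V -> V) :
  is_inf_sep_hilbert ip ->
  contraction ip T ->
  is_adjoint ip T Ts ->
  cnu ip T ->
  orth_dsum3 ip (sperp ip (A_T T Ts)) (A_T T Ts) (Q_ ip T Ts) (Qs_ ip T Ts).
Proof.
move=> [ip_axioms complete _ _] _ T_adj _; split.
- apply/seteqP; split; first exact: sperp_A_T_sub_sum3.
  exact: sum3_sub_sperp_A_T.
- exact: orth2_A_T_Q.
- exact: orth2_A_T_Qs.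
- exact: orth2_Q_Qs.
Qed.
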